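(* Let $0<\mu<L_{\max}^{-1}$ with $L_{\max}=\max_i\|A_i\|_2^2$, let $\{x^n\}$ be generated by GAITA (as in the context) from an arbitrary $x^0\in\mathbf{R}^N$, and let $x^*$ be any limit point of $\{x^n\}$. Then there exists a positive integer $n^*>N$ such that for all $n>n^*$: (a) for every $j=1,\dots,N$, either $x_j^n=0$ or $|x_j^n|\geq\eta_{\mu,q}$; (b) $Supp(x^n)=Supp(x^* )$; (c) $sgn(x^n)=sgn(x^* )$ (componentwise).
   Context: Let $A\in\mathbf{R}^{m\times N}$ have columns $A_1,\dots,A_N$, $y\in\mathbf{R}^m$, $\lambda>0$, $q\in(0,1)$, and $T_\lambda(x)=\frac12\|Ax-y\|_2^2+\lambda\sum_{i=1}^N|x_i|^q$. For a step size $\mu>0$ set $\tau_{\mu,q}=\frac{2-q}{2-2q}(2\lambda\mu(1-q))^{\frac{1}{2-q}}$ and $\eta_{\mu,q}=(2\lambda\mu(1-q))^{\frac{1}{2-q}}$. For $z\in\mathbf{R}$ let $prox_{\mu,\lambda|\cdot|^q}(z)=\arg\min_{v\in\mathbf{R}}\{\frac{(z-v)^2}{2\mu}+\lambda|v|^q\}$ (a single point when $|z|\neq\tau_{\mu,q}$). Define $\mathcal{T}(z,w)$ as the unique element of $prox_{\mu,\lambda|\cdot|^q}(z)$ if $|z|\neq\tau_{\mu,q}$, and, if $|z|=\tau_{\mu,q}$, as $sgn(z)\eta_{\mu,q}$ when $w\neq0$ and $0$ when $w=0$. GAITA: given $x^0\in\mathbf{R}^N$, for $n=0,1,2,\dots$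 let $i=(n\bmod N)+1$, $z_i^n=x_i^n-\mu A_i^T(Ax^n-y)$, $x_i^{n+1}=\mathcal{T}(z_i^n,x_i^n)$, $x_j^{n+1}=x_j^n$ for $j\neq i$. $Supp(x)=\{i:x_i\neq0\}$, $sgn(0)=0$. *)

From HB Require Import structures.
From mathcomp Require Import all_boot all_order all_algebra.
From mathcomp Require Import all_classical all_reals all_analysis.
Set Implicit Arguments. Unset Strict Implicit. Unset Printing Implicit Defensive.
Import Order.TTheory GRing.Theory Num.Theory.
Local Open Scope ring_scope.

Section GAITA.
Variable R : realType.

Definition penq (lam q v : R) : R := lam * (`|v| `^ q).

Definition prox_obj (mu lam q z v : R) : R := (z - v) ^+ 2 / (2 * mu) + penq lam q v.

Definition in_prox (mu lam q z v : R) : Prop :=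
  forall w : R, prox_obj mu lam q z v <= prox_obj mu lam q z w.

Definition eta_mq (mu lam q : R) : R := (2 * lam * mu * (1 - q)) `^ (1 / (2 - q)).
Definition tau_mq (mu lam q : R) : R := (2 - q) / (2 - 2 * q) * eta_mq mu lam q.

Definition is_T (mu lam q z w v : R) : Prop :=
  if `|z| != tau_mq mu lam q then in_prox mu lam q z v
  else v = (if w != 0 then Num.sg z * eta_mq mu lam q else 0).

Definition colnorm2 (m N : nat) (A : 'M[R]_(m, N)) (i : 'I_N) : R :=
  \sum_(k < m) A k i ^+ 2.

Definition Lmax (m N : nat) (A : 'M[R]_(m, N)) : R :=
  \big[Num.max/0]_(i < N) colnorm2 A i.

(* the sequence x : nat -> 'cV_N is generated by GAITA (indices are 0-based:
   at step n the coordinate updated is n mod N) *)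
Definition GAITA_seq (m N : nat) (A : 'M[R]_(m, N)) (y : 'cV[R]_m)
    (lam q mu : R) (x : nat -> 'cV[R]_N) : Prop :=
  forall (n : nat) (j : 'I_N),
    if val j == (n %% N)%N then
      is_T mu lam q (x n j 0 - mu * ((A^T *m (A *m x n - y)) j 0)) (x n j 0)
           (x n.+1 j 0)
    else x n.+1 j 0 = x n j 0.

Definition gaita_limit_point (N : nat) (x : nat -> 'cV[R]_N) (xs : 'cV[R]_N) : Prop :=
  forall (eps : R), 0 < eps -> forall M : nat,
    exists n : nat, (M <= n)%N /\ forall j : 'I_N, `|x n j 0 - xs j 0| < eps.

Definition Supp (N : nat) (v : 'cV[R]_N) : {set 'I_N} := [set j | v j 0 != 0].

End GAITA.

(* The scalar proximal map of |.|^q has a jump: comparing a minimizer v with 0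
   and with s v for s close to 1 gives the first-order bound
   2 mu lam (1 - q) |v|^q <= v^2, i.e. |v| >= eta whenever v <> 0; and at the
   tie |z| = tau both 0 and sgn(z) eta are minimizers.  So every coordinate
   written by GAITA is 0 or of modulus at least eta.  Each GAITA step is a
   proximal coordinate step, hence decreases T_lambda by at least
   (1 - mu Lmax) / (2 mu) times the squared change; as T_lambda >= 0, eventually
   no coordinate moves by eta or more.  A coordinate confined to
   {0} U {|t| >= eta} that moves by less than eta keeps its sign, so the signs
   freeze, and any limit point inherits them. *)

From HB Require Import structures.
From mathcomp Require Import all_boot all_order all_algebra.
From mathcomp Require Import all_classical all_reals all_analysis.
From mathcomp Require Import lra ring.
Set Implicit Arguments. Unset Strict Implicit. Unset Printing Implicit Defensive.
Import Order.TTheory GRing.Theory Num.Theory.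
Local Open Scope ring_scope.

Lemma powR_le_affine {R : realType} {s r : R} : 0 <= s -> 0 < r -> r < 1 ->
  s `^ r <= r * s + (1 - r).
Proof.
move=> s_ge0 r_gt0 r_lt1.
have := @conjugate_powR R (s `^ r) 1 r^-1 (1 - r)^-1 (powR_ge0 _ _) ler01.
rewrite !invr_gt0 r_gt0 subr_gt0 r_lt1 !invrK => /(_ isT isT).
rewrite addrC subrK => /(_ erefl).
by rewrite mulr1 -powRrM mulfV ?gt_eqF // powRr1 // powR1 mul1r mulrC.
Qed.

Lemma powR_mul_subrK {R : realType} (x r s : R) : 0 < x ->
  x `^ (r - s) * x `^ s = x `^ r.
Proof. by move=> x_gt0; rewrite -powRD ?(gt_eqF x_gt0) ?implybT // subrK. Qed.

Lemma sqr_powR {R : realType} (x s : R) : 0 < x -> x ^+ 2 = x `^ (2 - s) * x `^ s.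
Proof. by move=> x_gt0; rewrite powR_mul_subrK // -(powR_mulrn _ (ltW x_gt0)). Qed.

Section ScalarThreshold.
Variables (R : realType) (mu lam q : R).
Hypotheses (mu_gt0 : 0 < mu) (lam_gt0 : 0 < lam) (q_gt0 : 0 < q) (q_lt1 : q < 1).

Local Notation eta := (eta_mq mu lam q).
Local Notation tau := (tau_mq mu lam q).

Let q1_gt0 : 0 < 1 - q. Proof. by rewrite subr_gt0. Qed.
Let q2_gt0 : 0 < 2 - q. Proof. by move: q_lt1 => ?; lra. Qed.

Lemma prox_obj_le z v w :
  (prox_obj mu lam q z v <= prox_obj mu lam q z w) =
  ((z - v) ^+ 2 + 2 * mu * penq lam q v <= (z - w) ^+ 2 + 2 * mu * penq lam q w).
Proof.
have mu2_gt0 : 0 < 2 * mu by rewrite mulr_gt0.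
rewrite /prox_obj -(ler_pM2r mu2_gt0) ![(_ + _) * (2 * mu)]mulrDl.
by rewrite !divfK ?gt_eqF // ![penq _ _ _ * _]mulrC.
Qed.

Lemma in_proxNN z v : in_prox mu lam q z v -> in_prox mu lam q (- z) (- v).
Proof.
have objNN u : prox_obj mu lam q (- z) (- u) = prox_obj mu lam q z u.
  by rewrite /prox_obj /penq normrN -opprD sqrrN.
by move=> zv w; rewrite -[w]opprK !objNN.
Qed.

Lemma eta_gt0 : 0 < eta.
Proof. by rewrite /eta_mq powR_gt0 // !mulr_gt0 // subr_gt0. Qed.

Lemma powR_eta : eta `^ (2 - q) = 2 * lam * mu * (1 - q).
Proof.
rewrite /eta_mq -powRrM mul1r mulVf ?gt_eqF // powRr1 //.
by rewrite ltW // !mulr_gt0 // subr_gt0.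
Qed.

Lemma sqr_eta : eta ^+ 2 = 2 * lam * mu * (1 - q) * eta `^ q.
Proof. by rewrite -powR_eta -sqr_powR ?eta_gt0. Qed.

Lemma tau_gt0 : 0 < tau.
Proof. by rewrite /tau_mq mulr_gt0 ?eta_gt0 // divr_gt0 //; move: q_lt1; lra. Qed.

Lemma in_prox_penalty_le z v : in_prox mu lam q z v ->
  2 * mu * lam * (1 - q) * `|v| `^ q <= v ^+ 2.
Proof.
rewrite /in_prox => zv.
set a := 2 * mu * lam; set P := `|v| `^ q.
have a_gt0 : 0 < a by rewrite !mulr_gt0.
have P_ge0 : 0 <= P by rewrite powR_ge0.
have opt0 : v ^+ 2 + a * P <= 2 * z * v.
  move: (zv 0); rewrite prox_obj_le /penq normr0 powR0 ?gt_eqF // -/P.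
  have -> : (z - v) ^+ 2 = z ^+ 2 - 2 * z * v + v ^+ 2 by ring.
  rewrite /a; lra.
have opt_scale s : 1 < s -> a * (1 - q) * P <= s * v ^+ 2.
  move=> s_gt1.
  have s_gt0 : 0 < s by lra.
  move: (zv (s * v)).
  rewrite prox_obj_le /penq normrM (gtr0_norm s_gt0) (powRM _ (ltW s_gt0)) // -/P.
  have bern : s `^ q <= q * s + (1 - q) by apply: powR_le_affine => //; lra.
  have : a * P * s `^ q <= a * P * (q * s + (1 - q)).
    by rewrite ler_wpM2l // mulr_ge0 // ltW.
  have s1_gt0 : 0 < s - 1 by rewrite subr_gt0.
  have := ler_wpM2l (ltW s1_gt0) opt0.
  rewrite /a; move=> opt0s aPs opt_s.
  have : (s - 1) * (a * (1 - q) * P - s * v ^+ 2) <= 0 by rewrite /a; lra.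
  by rewrite pmulr_rle0 // subr_le0.
(* letting s decrease to 1 *)
apply/ler_addgt0Pr => e e_gt0.
have v2_ge0 : 0 <= v ^+ 2 := sqr_ge0 v.
have d_gt0 : 0 < v ^+ 2 + 1 by lra.
apply: (le_trans (opt_scale (1 + e / (v ^+ 2 + 1)) _)).
  by rewrite ltrDl divr_gt0.
rewrite mulrDl mul1r lerD2l mulrAC ler_pdivrMr //.
by rewrite ler_wpM2l ?ltW //; lra.
Qed.

Lemma in_prox_norm_ge_eta z v : in_prox mu lam q z v -> v != 0 -> eta <= `|v|.
Proof.
move=> /in_prox_penalty_le zv v_neq0.
have vq_gt0 : 0 < `|v| `^ q by rewrite powR_gt0 // normr_gt0.
have v2 : v ^+ 2 = `|v| `^ (2 - q) * `|v| `^ q.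
  by rewrite -sqr_powR ?normr_gt0 // real_normK ?num_real.
have : 2 * lam * mu * (1 - q) <= `|v| `^ (2 - q).
  by rewrite -(ler_pM2r vq_gt0) -v2 (mulrAC 2 lam mu).
rewrite -powR_eta => /(ge0_ler_powR (r := (2 - q)^-1)).
rewrite invr_ge0 ltW // !nnegrE !powR_ge0 => /(_ isT isT isT).
by rewrite -!powRrM !mulfV ?gt_eqF // mulr1 powRr1.
Qed.

Lemma powR_amgm t : 0 <= t -> (2 - q) * t `^ (1 - q) <= (1 - q) * t `^ (2 - q) + 1.
Proof.
move=> t_ge0.
set r := (1 - q) / (2 - q).
have r_gt0 : 0 < r by rewrite divr_gt0.
have r_lt1 : r < 1 by rewrite ltr_pdivrMr // mul1r ltrD2r ltr1n.
have := powR_le_affine (powR_ge0 t (2 - q)) r_gt0 r_lt1.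
have qr : (2 - q) * r = 1 - q by rewrite /r mulrC divfK ?gt_eqF.
rewrite -powRrM qr -(ler_pM2l q2_gt0) => /le_trans; apply.
by rewrite mulrDr mulrA qr mulrBr mulr1 qr; lra.
Qed.

Lemma tau_sqr_le w : tau ^+ 2 <= (tau - w) ^+ 2 + 2 * mu * (lam * `|w| `^ q).
Proof.
have pen_ge0 : 0 <= 2 * mu * (lam * `|w| `^ q).
  by rewrite !mulr_ge0 ?powR_ge0 // ltW.
have [w_le0|w_gt0] := lerP w 0.
  have : 0 <= tau * - w by rewrite mulr_ge0 ?oppr_ge0 // ltW // tau_gt0.
  have := sqr_ge0 w; lra.
set t := w / eta.
have t_gt0 : 0 < t by rewrite divr_gt0 ?eta_gt0.
have w_eta : w = eta * t by rewrite /t mulrC divfK ?gt_eqF ?eta_gt0.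
have E : (tau - w) ^+ 2 + 2 * mu * (lam * `|w| `^ q) - tau ^+ 2 =
    2 * mu * lam * eta `^ q * t `^ q *
    ((1 - q) * t `^ (2 - q) + 1 - (2 - q) * t `^ (1 - q)).
  have -> : (tau - w) ^+ 2 + 2 * mu * (lam * `|w| `^ q) - tau ^+ 2 =
      eta ^+ 2 * t ^+ 2 - (2 - q) / (1 - q) * eta ^+ 2 * (t `^ (1 - q) * t `^ q)
      + 2 * mu * (lam * (eta `^ q * t `^ q)).
    rewrite powR_mul_subrK // powRr1 ?ltW // gtr0_norm // w_eta.
    rewrite powRM ?ltW ?eta_gt0 // /tau_mq.
    by field; rewrite ?gt_eqF //; move: q_lt1; lra.
  by rewrite sqr_eta (sqr_powR q t_gt0); field; rewrite gt_eqF.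
rewrite -subr_ge0 E; apply: mulr_ge0; last by rewrite subr_ge0 powR_amgm // ltW.
by rewrite !mulr_ge0 ?powR_ge0 // ltW.
Qed.

Lemma tau_sub_eta_sqr : (tau - eta) ^+ 2 + 2 * mu * (lam * eta `^ q) = tau ^+ 2.
Proof.
rewrite /tau_mq.
have -> : ((2 - q) / (2 - 2 * q) * eta - eta) ^+ 2 =
    ((2 - q) / (2 - 2 * q) * eta) ^+ 2 - (2 - q) / (1 - q) * eta ^+ 2 + eta ^+ 2.
  by field; rewrite gt_eqF //; move: q_lt1; lra.
by rewrite sqr_eta; field; rewrite !gt_eqF //; move: q_lt1; lra.
Qed.

Lemma in_prox_tau : in_prox mu lam q tau 0 /\ in_prox mu lam q tau eta.
Proof.
split=> w; rewrite prox_obj_le /penq.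
  by rewrite subr0 normr0 powR0 ?gt_eqF // !mulr0 addr0 tau_sqr_le.
by rewrite gtr0_norm ?eta_gt0 // tau_sub_eta_sqr tau_sqr_le.
Qed.

Lemma in_prox_tie z : `|z| = tau ->
  in_prox mu lam q z 0 /\ in_prox mu lam q z (Num.sg z * eta).
Proof.
have [z_lt0|z_gt0|->] := ltgtP z 0 => z_tau.
- have -> : z = - tau by rewrite -z_tau ltr0_norm ?opprK.
  rewrite sgrN gtr0_sg ?tau_gt0 // mulN1r -{1}oppr0.
  by have [? ?] := in_prox_tau; split; apply: in_proxNN.
- have -> : z = tau by rewrite -z_tau gtr0_norm.
  by rewrite gtr0_sg ?tau_gt0 // mul1r; exact: in_prox_tau.
- by move: tau_gt0; rewrite -z_tau normr0 ltxx.
Qed.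

Lemma is_T_in_prox z w v : is_T mu lam q z w v -> in_prox mu lam q z v.
Proof.
rewrite /is_T; case: ifPn => // /negPn/eqP /in_prox_tie[tie0 tie_eta].
by case: ifP => _ ->.
Qed.

Lemma is_T_eq0_or_ge_eta z w v : is_T mu lam q z w v -> v = 0 \/ eta <= `|v|.
Proof.
move=> /is_T_in_prox zv; have [->|v_neq0] := eqVneq v 0; first by left.
by right; apply: in_prox_norm_ge_eta zv v_neq0.
Qed.

End ScalarThreshold.

Section Objective.
Variables (R : realType) (m N : nat) (A : 'M[R]_(m, N)) (y : 'cV[R]_m) (lam q : R).

Definition Tlam (x : 'cV[R]_N) : R :=
  2^-1 * \sum_(k < m) ((A *m x - y) k 0) ^+ 2 + lam * \sum_(j < N) `|x j 0| `^ q.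

Lemma Tlam_ge0 x : 0 <= lam -> 0 <= Tlam x.
Proof.
move=> lam_ge0.
by rewrite addr_ge0 ?mulr_ge0 ?sumr_ge0 // => *; rewrite ?sqr_ge0 ?powR_ge0.
Qed.

Lemma colnorm2_le_Lmax i : colnorm2 A i <= Lmax A.
Proof. exact: le_bigmax. Qed.

Variables (x x' : 'cV[R]_N) (i : 'I_N).
Hypothesis x'E : forall j, j != i -> x' j 0 = x j 0.

Lemma sum_coord_update (f : 'I_N -> R -> R) :
  \sum_(j < N) f j (x' j 0) = \sum_(j < N) f j (x j 0) + f i (x' i 0) - f i (x i 0).
Proof.
rewrite [LHS](bigD1 i) // [in RHS](bigD1 i) //=.
rewrite (eq_bigr (fun j => f j (x j 0))) => [|j /x'E -> //].
by lra.
Qed.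

Lemma residual_sqr_update :
  \sum_(k < m) ((A *m x' - y) k 0) ^+ 2 =
  \sum_(k < m) ((A *m x - y) k 0) ^+ 2
  + 2 * (x' i 0 - x i 0) * (A^T *m (A *m x - y)) i 0
  + (x' i 0 - x i 0) ^+ 2 * colnorm2 A i.
Proof.
set d := x' i 0 - x i 0; set r := A *m x - y.
have res k : (A *m x' - y) k 0 = r k 0 + A k i * d.
  rewrite /r !mxE.
  by rewrite (sum_coord_update (fun j v => A k j * v)) /d; ring.
have g_sum : (A^T *m r) i 0 = \sum_(k < m) A k i * r k 0.
  by rewrite mxE; apply: eq_bigr => k _; rewrite mxE.
rewrite g_sum /colnorm2 !mulr_sumr -!big_split /=.
by apply: eq_bigr => k _; rewrite res; ring.
Qed.

Lemma Tlam_coord_descent mu : 0 < mu ->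
  in_prox mu lam q (x i 0 - mu * (A^T *m (A *m x - y)) i 0) (x' i 0) ->
  Tlam x' + (1 - mu * Lmax A) / (2 * mu) * (x' i 0 - x i 0) ^+ 2 <= Tlam x.
Proof.
move=> mu_gt0 /(_ (x i 0)); rewrite prox_obj_le // /penq => opt.
have mu2_gt0 : 0 < 2 * mu by rewrite mulr_gt0.
rewrite -(ler_pM2l mu2_gt0) mulrDr.
have -> : 2 * mu * ((1 - mu * Lmax A) / (2 * mu) * (x' i 0 - x i 0) ^+ 2) =
    (1 - mu * Lmax A) * (x' i 0 - x i 0) ^+ 2 by field; rewrite gt_eqF.
rewrite /Tlam residual_sqr_update (sum_coord_update (fun _ v => `|v| `^ q)).
have := ler_wpM2l (mulr_ge0 (ltW mu_gt0) (sqr_ge0 (x' i 0 - x i 0)))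
  (colnorm2_le_Lmax i).
lra.
Qed.

End Objective.

Lemma sgr_eq_of_dist_lt {R : realFieldType} (a b : R) :
  `|b - a| < `|a| -> Num.sg b = Num.sg a.
Proof.
move=> /ltr_normlP[].
have [a_lt0|a_gt0|->] := ltgtP a 0; last by rewrite normr0; lra.
- by rewrite ltr0_norm // => *; rewrite !ltr0_sg //; lra.
- by rewrite gtr0_norm // => *; rewrite !gtr0_sg //; lra.
Qed.

Lemma sgr_eq_of_gap {R : realFieldType} (e a b : R) :
  (a = 0 \/ e <= `|a|) -> (b = 0 \/ e <= `|b|) -> `|b - a| < e -> Num.sg b = Num.sg a.
Proof.
move=> [->|a_ge] [->|b_ge] ab_lt //; rewrite ?subr0 ?sub0r ?normrN in ab_lt.
- by move: (lt_le_trans ab_lt b_ge); rewrite ltxx.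
- by move: (lt_le_trans ab_lt a_ge); rewrite ltxx.
- by apply: sgr_eq_of_dist_lt; apply: lt_le_trans a_ge.
Qed.

Section NonincreasingSequence.
Local Open Scope classical_set_scope.

Lemma nonincreasing_eventually_step_lt {R : realType} (F : R^nat) (c : R) :
  0 < c -> (forall n, 0 <= F n) -> (forall n, F n.+1 <= F n) ->
  exists n0, forall n, (n0 <= n)%N -> F n - F n.+1 < c.
Proof.
move=> c_gt0 F_ge0 /nonincreasing_seqP F_noninc.
have F_cvg : F n @[n --> \oo] --> inf (range F).
  by apply: nonincreasing_cvgn => //; exists 0 => _ [n _ <-].
have F_step : F n - F n.+1 @[n --> \oo] --> inf (range F) - inf (range F).
  by apply: cvgB => //; rewrite cvg_shiftS.
have [n0 _ n0_near] := cvgr_dist_lt _ _ F_step _ c_gt0.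
exists n0 => n /n0_near; rewrite subrr sub0r normrN.
exact: le_lt_trans (ler_norm _).
Qed.

End NonincreasingSequence.

Lemma limit_point_sgr {R : realType} {N : nat} (x : nat -> 'cV[R]_N) xs (e : R) n1 j :
  0 < e -> gaita_limit_point x xs ->
  (forall n, (n1 <= n)%N -> x n j 0 = 0 \/ e <= `|x n j 0|) ->
  (forall n, (n1 <= n)%N -> Num.sg (x n j 0) = Num.sg (x n1 j 0)) ->
  Num.sg (xs j 0) = Num.sg (x n1 j 0).
Proof.
move=> e_gt0 xs_lim gap sg_const.
have [x_eq0|x_neq0] := eqVneq (x n1 j 0) 0.
  have [->|xs_neq0] := eqVneq (xs j 0) 0; first by rewrite x_eq0.
  have xs_gt0 : 0 < `|xs j 0| by rewrite normr_gt0.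
  have [n [n1_le /(_ j)]] := xs_lim _ xs_gt0 n1.
  have -> : x n j 0 = 0 by apply/eqP; rewrite -sgr_eq0 sg_const // x_eq0 sgr0.
  by rewrite sub0r normrN ltxx.
have [n [n1_le /(_ j) near_e]] := xs_lim e e_gt0 n1.
have [x_eq0|x_ge] := gap n n1_le.
  by move: x_neq0; rewrite -sgr_eq0 -(sg_const n) // x_eq0 sgr0 eqxx.
rewrite -(sg_const n) //; apply: sgr_eq_of_dist_lt.
by rewrite distrC; apply: lt_le_trans x_ge.
Qed.

Section GaitaIterates.
Variables (R : realType) (m N : nat) (A : 'M[R]_(m, N)) (y : 'cV[R]_m).
Variables (lam q mu : R) (x : nat -> 'cV[R]_N).
Hypotheses (lam_gt0 : 0 < lam) (q_gt0 : 0 < q) (q_lt1 : q < 1) (mu_gt0 : 0 < mu).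
Hypotheses (muL_lt1 : mu * Lmax A < 1) (gaita : GAITA_seq A y lam q mu x).

Local Notation eta := (eta_mq mu lam q).
Local Notation T := (Tlam A y lam q).
Local Notation rate := ((1 - mu * Lmax A) / (2 * mu)).

Lemma gaita_eq0_or_ge_eta n (j : 'I_N) :
  (j < n)%N -> x n j 0 = 0 \/ eta <= `|x n j 0|.
Proof.
elim: n => [//|n IHn] j_le_n; have := gaita n j.
case: ifP => [_|j_neq_n ->]; first exact: is_T_eq0_or_ge_eta.
apply: IHn; rewrite ltn_neqAle -ltnS j_le_n andbT.
by apply: contraFneq j_neq_n => j_eq_n; rewrite -j_eq_n modn_small.
Qed.

Let rate_gt0 : 0 < rate.
Proof. by rewrite divr_gt0 ?subr_gt0 ?mulr_gt0. Qed.

Lemma gaita_step_descent n (j : 'I_N) :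
  T (x n.+1) + rate * (x n.+1 j 0 - x n j 0) ^+ 2 <= T (x n).
Proof.
have N_gt0 : (0 < N)%N := leq_ltn_trans (leq0n _) (ltn_ord j).
set i := Ordinal (ltn_pmod n N_gt0).
have x_upd k : k != i -> x n.+1 k 0 = x n k 0.
  move=> k_neq_i; have := gaita n k; case: ifP => // /eqP k_eq.
  by move: k_neq_i; rewrite -(inj_eq val_inj) k_eq eqxx.
have desc_i : T (x n.+1) + rate * (x n.+1 i 0 - x n i 0) ^+ 2 <= T (x n).
  apply: Tlam_coord_descent x_upd _ mu_gt0 _.
  by have := gaita n i; rewrite eqxx => /(is_T_in_prox mu_gt0 lam_gt0 q_gt0 q_lt1).
have [->//|j_neq_i] := eqVneq j i.
rewrite x_upd // subrr expr0n mulr0 addr0; apply: le_trans desc_i.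
by rewrite lerDl mulr_ge0 ?sqr_ge0 // ltW.
Qed.

Lemma gaita_eventually_steps_lt_eta :
  exists n0, forall n, (n0 <= n)%N -> forall j : 'I_N, `|x n.+1 j 0 - x n j 0| < eta.
Proof.
have [N_eq0|N_gt0] := posnP N.
  by exists 0%N => n _ j; have := ltn_ord j; rewrite {2}N_eq0.
have eta_gt0 : 0 < eta by exact: eta_gt0.
have T_noninc n : T (x n.+1) <= T (x n).
  apply: le_trans (gaita_step_descent n (Ordinal N_gt0)).
  by rewrite lerDl mulr_ge0 ?sqr_ge0 // ltW.
have T_ge0 n : 0 <= T (x n) by apply: Tlam_ge0; apply: ltW.
have [n0 n0_small] := nonincreasing_eventually_step_lt
  (mulr_gt0 rate_gt0 (exprn_gt0 2 eta_gt0)) T_ge0 T_noninc.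
exists n0 => n /n0_small small j; rewrite ltNge; apply/negP => eta_le.
have : eta ^+ 2 <= (x n.+1 j 0 - x n j 0) ^+ 2.
  rewrite -[_ ^+ 2 in X in _ <= X]real_normK ?num_real // !expr2.
  by apply: ler_pM => //; apply: ltW.
move=> /(ler_wpM2l (ltW rate_gt0)).
have := gaita_step_descent n j; lra.
Qed.

Lemma gaita_eventually_sgr_const : exists n1, (N <= n1)%N /\
  forall n (j : 'I_N), (n1 <= n)%N -> Num.sg (x n j 0) = Num.sg (x n1 j 0).
Proof.
have [n0 small] := gaita_eventually_steps_lt_eta.
set n1 := maxn n0 N; have N_le_n1 : (N <= n1)%N := leq_maxr n0 N.
exists n1; split=> // n j /subnK <-; elim: (n - n1)%N => [//|k IHk].
have n1_le : (n1 <= k + n1)%N := leq_addl k n1.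
have j_lt : (j < k + n1)%N := leq_trans (ltn_ord j) (leq_trans N_le_n1 n1_le).
rewrite addSn -IHk; apply: sgr_eq_of_gap (small _ _ j).
- exact: gaita_eq0_or_ge_eta j_lt.
- exact: gaita_eq0_or_ge_eta (ltn_trans j_lt (ltnSn _)).
- exact: leq_trans (leq_maxl n0 N) n1_le.
Qed.

End GaitaIterates.

Theorem theorem3 (R : realType) (m N : nat) (A : 'M[R]_(m, N)) (y : 'cV[R]_m)
    (lam q mu : R) (x : nat -> 'cV[R]_N) (xs : 'cV[R]_N) :
  0 < lam -> 0 < q -> q < 1 ->
  0 < mu -> mu * Lmax A < 1 ->
  GAITA_seq A y lam q mu x ->
  gaita_limit_point x xs ->
  exists nstar : nat, (N < nstar)%N /\
    forall n : nat, (nstar < n)%N ->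
      (forall j : 'I_N, x n j 0 = 0 \/ eta_mq mu lam q <= `|x n j 0|) /\
      Supp (x n) = Supp xs /\
      (forall j : 'I_N, Num.sg (x n j 0) = Num.sg (xs j 0)).
Proof.
move=> lam_gt0 q_gt0 q_lt1 mu_gt0 muL_lt1 gaita xs_lim.
have [n1 [N_le_n1 sg_const]] :=
  gaita_eventually_sgr_const lam_gt0 q_gt0 q_lt1 mu_gt0 muL_lt1 gaita.
have gap n (j : 'I_N) : (n1 <= n)%N -> x n j 0 = 0 \/ eta_mq mu lam q <= `|x n j 0|.
  move=> n1_le; apply: (gaita_eq0_or_ge_eta lam_gt0 q_gt0 q_lt1 mu_gt0 gaita).
  exact: leq_trans (ltn_ord j) (leq_trans N_le_n1 n1_le).
have sg_xs j : Num.sg (xs j 0) = Num.sg (x n1 j 0).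
  exact: limit_point_sgr (eta_gt0 mu_gt0 lam_gt0 q_lt1) xs_lim (gap^~ j) (sg_const^~ j).
exists n1.+1; split=> // n /ltnW/ltnW n1_le; split; [|split] => [j||j].
- exact: gap.
- apply/setP => j; rewrite !inE.
  by rewrite -(sgr_eq0 (x n j 0)) -(sgr_eq0 (xs j 0)) sg_const // sg_xs.
- by rewrite sg_const // sg_xs.
Qed.
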